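(* Let $\{\gamma_\Lambda\}_{\Lambda\in\mathcal{S}}$ be a specification on $(\Omega,\mathcal{F})$. Then for each $\Lambda\in\mathcal{S}$, $\Gamma\in\mathcal{S}(\Lambda^c)$ and bounded measurable functions $f,g$ on $\Omega$, $$\gamma_{\Lambda\cup\Gamma}\bigl[f\,\gamma_\Lambda(\gamma_\Gamma(g))\bigr]=\gamma_{\Lambda\cup\Gamma}\bigl[g\,\gamma_\Gamma(\gamma_\Lambda(f))\bigr].$$
   Context: $(E,\mathcal{E})$ is a measurable space, $\Omega=E^{\mathbb{Z}^d}$ with product $\sigma$-algebra $\mathcal{F}$; for $U\subset\mathbb{Z}^d$, $\mathcal{F}_U$ is the $\sigma$-algebra generated by the coordinates in $U$, $U^c$ the complement, $\mathcal{S}(U)$ the finite subsets of $U$, $\mathcal{S}=\mathcal{S}(\mathbb{Z}^d)$. For a kernel $\gamma$ and bounded measurable $f$, $\gamma(f)(\omega)=\int f(\eta)\gamma(d\eta\mid\omega)$; $(\gamma\tilde\gamma)(f)=\gamma(\tilde\gamma(f))$. A specification is a family of probability kernels $\{\gamma_\Lambda\}_{\Lambda\in\mathcal{S}}$ such that for all $\Lambda\in\mathcal{S}$: $\gamma_\Lambda(A\mid\cdot)$ is $\mathcal{F}_{\Lambda^c}$-measurable for $A\in\mathcal{F}$; $\gamma_\Lambda(B\mid\omega)=\mathbf 1_B(\omega)$ for $B\in\mathcal{F}_{\Lambda^c}$; $\gamma_\Delta\gamma_\Lambda=\gamma_\Delta$ for all $\Delta\in\mathcal{S}$ with $\Delta\supset\Lambda$.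 *)

From HB Require Import structures.
From mathcomp Require Import all_boot all_order all_algebra.
From mathcomp Require Import all_classical all_reals all_analysis measurable_realfun.
Unset Printing Implicit Defensive.
Import Order.TTheory GRing.Theory Num.Theory.
Local Open Scope classical_set_scope.
Local Open Scope ring_scope.

Definition Zd (d : nat) : Type := 'rV[int]_d.

Definition coord_sets {d : nat} {dE : measure_display} (E : measurableType dE)
    (U : set (Zd d)) : set (set (Zd d -> E)) :=
  \bigcup_(i in U) preimage_set_system setT (fun w : Zd d -> E => w i) measurable.

Definition sigmaF {d : nat} {dE : measure_display} (E : measurableType dE)
    (U : set (Zd d)) : set (set (Zd d -> E)) :=
  <<s coord_sets E U >>.

(* Omega = E^{Z^d} with the product sigma-algebra F = F_{Z^d}. *)
Definition Omega (d : nat) {dE : measure_display} (E : measurableType dE) :=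
  g_sigma_algebraType (coord_sets E [set: Zd d]).

Definition F_measurable {d : nat} {dE : measure_display} (E : measurableType dE)
    {R : realType} (U : set (Zd d)) (h : (Zd d -> E) -> \bar R) : Prop :=
  forall B : set (\bar R), measurable B -> sigmaF E U (h @^-1` B).

Definition kapp {d : nat} {dE : measure_display} {E : measurableType dE}
    {R : realType} (gamma : Omega d E -> probability (Omega d E) R)
    (f : Omega d E -> R) : Omega d E -> R :=
  fun w => Rintegral (gamma w) setT f.

(* A specification: a family of probability kernels indexed by the finite
   subsets of Z^d (values at infinite sets are irrelevant). *)
Definition specification {d : nat} {dE : measure_display} {E : measurableType dE}
    {R : realType} (gamma : set (Zd d) -> Omega d E -> probability (Omega d E) R)
    : Prop :=
  forall Lam : set (Zd d), finite_set Lam ->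
    (forall A : set (Omega d E), measurable A ->
       F_measurable E (~` Lam) (fun w => gamma Lam w A))
 /\ (forall B : set (Omega d E), sigmaF E (~` Lam) B ->
       forall w, gamma Lam w B = (\1_B w)%:E)
 /\ (forall Delta : set (Zd d), finite_set Delta -> Lam `<=` Delta ->
       forall (A : set (Omega d E)), measurable A -> forall w,
         (\int[gamma Delta w]_eta gamma Lam eta A = gamma Delta w A)%E).

(* Put [Delta = Lam `|` Gam].  Consistency [gamma_Delta gamma_Lam = gamma_Delta]
   says that [gamma_Delta(.|w)] is the mixture of the [gamma_Lam(.|x)] over
   [gamma_Delta(.|w)], and since [gamma_Lam(.|x)] is carried by the
   [F_{Lam^c}]-atom of [x], [gamma_Lam] pulls out [F_{Lam^c}]-measurable factors
   such as [gamma_Lam b].  Hence for all bounded measurable [f] and [b]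
     gamma_Delta [f gamma_Lam b] = gamma_Delta [gamma_Lam f gamma_Lam b]
                                 = gamma_Delta [gamma_Lam f b].
   Taking [b = gamma_Gam g], and then exchanging the roles of [Lam] and [Gam],
   both sides of the identity become [gamma_Delta [gamma_Lam f gamma_Gam g]]. *)

From HB Require Import structures.
From mathcomp Require Import all_boot all_order all_algebra.
From mathcomp Require Import all_classical all_reals all_analysis measurable_realfun.
From mathcomp Require Import giry.
Import Order.TTheory GRing.Theory Num.Theory.
Local Open Scope classical_set_scope.
Local Open Scope ring_scope.

Definition norm_bounded {T : Type} {R : numDomainType} (f : T -> R) :=
  exists M : R, forall x, `|f x| <= M.

Lemma norm_boundedM {T : Type} {R : numDomainType} {f g : T -> R} :
  norm_bounded f -> norm_bounded g -> norm_bounded (f \* g).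
Proof.
move=> [M fM] [N gN]; exists (M * N) => x.
by rewrite normrM ler_pM.
Qed.

Lemma norm_bounded_shift_ge0 {T : Type} {R : realDomainType} {f : T -> R} {M : R} :
  (forall x, `|f x| <= M) -> forall x, 0 <= f x + M.
Proof.
by move=> fM x; rewrite -lerBlDr sub0r lerNl (le_trans _ (fM x)) // -normrN ler_norm.
Qed.

Section bounded_Rintegral.
Context {d} {T : measurableType d} {R : realType} (P : probability T R).

Lemma bounded_integrable {f : T -> R} :
  measurable_fun setT f -> norm_bounded f -> P.-integrable setT (EFin \o f).
Proof.
move=> mf [M fM]; apply: measurable_bounded_integrable => //.
  by rewrite (le_lt_trans (probability_le1 _ measurableT)) ?ltry.
exists M; split; first by rewrite num_real.
by move=> y My x _; exact: le_trans (fM x) (ltW My).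
Qed.

Lemma Rintegral_probability_cst (c : R) : Rintegral P setT (fun=> c) = c.
Proof.
by rewrite Rintegral_cst //; have := probability_setT P; move=> /= ->; rewrite mulr1.
Qed.

Lemma norm_Rintegral_le {f : T -> R} {M : R} :
  measurable_fun setT f -> (forall x, `|f x| <= M) -> `|Rintegral P setT f| <= M.
Proof.
move=> mf fM; have bf : norm_bounded f by exists M.
apply: le_trans (le_normr_Rintegral measurableT (bounded_integrable mf bf)) _.
rewrite -[leRHS]Rintegral_probability_cst; apply: le_Rintegral => //.
- apply: bounded_integrable; first exact: measurableT_comp.
  by exists M => x; rewrite normr_id.
- by apply: bounded_integrable => //; exists `|M|.
Qed.

Lemma RintegralD_cst {f : T -> R} (c : R) :
  measurable_fun setT f -> norm_bounded f ->
  Rintegral P setT (fun x => f x + c) = Rintegral P setT f + c.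
Proof.
move=> mf bf; rewrite RintegralD ?Rintegral_probability_cst ?bounded_integrable //.
by exists `|c|.
Qed.

Lemma Rintegral_mul_ae_cst {f h : T -> R} {c : R} :
  measurable_fun setT f -> norm_bounded f -> measurable_fun setT h ->
  {ae P, forall x, h x = c} ->
  Rintegral P setT (f \* h) = c * Rintegral P setT f.
Proof.
move=> mf bf mh hc; rewrite -RintegralZl ?bounded_integrable //.
congr fine; apply: ae_eq_integral => //.
- exact/measurable_EFinP/measurable_funM.
- exact/measurable_EFinP/measurable_funM.
by apply: filterS hc => x hxc _; rewrite /= hxc mulrC.
Qed.

End bounded_Rintegral.

Section probability_kernel.
Context {d1 d2} {X : measurableType d1} {Y : measurableType d2} {R : realType}.
Context {k : X -> probability Y R}.
Hypothesis measurable_k : forall A, measurable A -> measurable_fun setT (k ^~ A).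

Let measurable_giry_k : measurable_fun setT (fun x => k x : giry Y R).
Proof. exact: measurable_giry_codensity. Qed.

Lemma norm_bounded_Rintegral {f : Y -> R} : measurable_fun setT f ->
  norm_bounded f -> norm_bounded (fun x => Rintegral (k x) setT f).
Proof. by move=> mf [M fM]; exists M => x; apply: norm_Rintegral_le. Qed.

Lemma measurable_Rintegral {f : Y -> R} : measurable_fun setT f ->
  norm_bounded f -> measurable_fun setT (fun x => Rintegral (k x) setT f).
Proof.
move=> mf bf; have [M fM] := bf.
have -> : (fun x => Rintegral (k x) setT f) =
          (fun x => Rintegral (k x) setT (fun y => f y + M) - M).
  by apply/funext => x; rewrite RintegralD_cst // addrK.
apply: measurable_funB => //; apply: measurableT_comp => //.
apply: (measurableT_comp (measurable_giry_int _ _) measurable_giry_k).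
- exact/measurable_EFinP/measurable_funD.
- by move=> y; rewrite lee_fin norm_bounded_shift_ge0.
Qed.

Context {mu : probability X R} {nu : probability Y R}.
Hypothesis mixture : forall A, measurable A -> (\int[mu]_x k x A = nu A)%E.

Lemma ge0_integral_mixture (h : Y -> \bar R) : measurable_fun setT h ->
  (forall y, 0 <= h y)%E -> (\int[nu]_y h y = \int[mu]_x \int[k x]_y h y)%E.
Proof.
move=> mh h0; rewrite -[RHS](giry_int_bind mu measurable_giry_k mh h0).
apply: eq_measure_integral => A mA _.
rewrite /= giry_int_map //; [exact/esym/mixture | exact: measurable_giry_ev].
Qed.

Lemma ge0_Rintegral_mixture {g : Y -> R} : measurable_fun setT g ->
  norm_bounded g -> (forall y, 0 <= g y) ->
  Rintegral nu setT g = Rintegral mu setT (fun x => Rintegral (k x) setT g).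
Proof.
move=> mg bg g0; rewrite /Rintegral ge0_integral_mixture //; last first.
  exact/measurable_EFinP.
congr fine; apply: eq_integral => x _.
by rewrite fineK // integrable_fin_num // bounded_integrable.
Qed.

Lemma Rintegral_mixture {f : Y -> R} : measurable_fun setT f -> norm_bounded f ->
  Rintegral nu setT f = Rintegral mu setT (fun x => Rintegral (k x) setT f).
Proof.
move=> mf bf; have [M fM] := bf.
have mfM : measurable_fun setT (fun y => f y + M) by exact: measurable_funD.
have bfM : norm_bounded (fun y => f y + M).
  by exists (M + `|M|) => y; rewrite (le_trans (ler_normD _ _)) ?lerD.
have shift (Q : probability Y R) :
    Rintegral Q setT f = Rintegral Q setT (fun y => f y + M) - M.
  by rewrite RintegralD_cst // addrK.
under [RHS]eq_Rintegral do rewrite shift.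
rewrite shift [RHS]RintegralD_cst; last 2 first.
- exact: measurable_Rintegral.
- exact: norm_bounded_Rintegral.
by rewrite ge0_Rintegral_mixture // => y; exact: norm_bounded_shift_ge0.
Qed.

End probability_kernel.

Definition OmegaF (d : nat) {dE : measure_display} (E : measurableType dE)
  (U : set (Zd d)) := g_sigma_algebraType (coord_sets E U).

Section sub_sigma_algebra.
Context {d : nat} {dE : measure_display} {E : measurableType dE} (U : set (Zd d)).

Lemma sigmaF_measurable (A : set (Omega d E)) : sigmaF E U A -> measurable A.
Proof.
apply: smallest_sub; first exact: (sigma_algebra_measurable (Omega d E)).
by move=> B [i Ui iB]; apply: sub_gen_smallest; exists i.
Qed.

Lemma measurable_fun_OmegaF {dY} {Y : measurableType dY} (h : Omega d E -> Y) :
  measurable_fun setT (h : OmegaF d E U -> Y) -> measurable_fun setT h.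
Proof. by move=> mh _ B mB; apply: sigmaF_measurable; exact: mh. Qed.

End sub_sigma_algebra.

Section specification.
Context {d : nat} {dE : measure_display} {E : measurableType dE} {R : realType}.
Context {gamma : set (Zd d) -> Omega d E -> probability (Omega d E) R}.
Hypothesis gamma_spec : specification gamma.
Context {Lam : set (Zd d)} (finite_Lam : finite_set Lam).

Lemma measurable_gamma_OmegaF (A : set (Omega d E)) : measurable A ->
  measurable_fun setT (gamma Lam ^~ A : OmegaF d E (~` Lam) -> \bar R).
Proof.
by move=> mA _ B mB; rewrite setTI; exact: (proj1 (gamma_spec _ finite_Lam)).
Qed.

Lemma measurable_gamma (A : set (Omega d E)) : measurable A ->
  measurable_fun setT (gamma Lam ^~ A).
Proof. by move=> mA; apply: measurable_fun_OmegaF; exact: measurable_gamma_OmegaF. Qed.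

Lemma measurable_kapp_OmegaF {f : Omega d E -> R} :
  measurable_fun setT f -> norm_bounded f ->
  measurable_fun setT (kapp (gamma Lam) f : OmegaF d E (~` Lam) -> R).
Proof. exact: (measurable_Rintegral measurable_gamma_OmegaF). Qed.

Lemma measurable_kapp {f : Omega d E -> R} :
  measurable_fun setT f -> norm_bounded f -> measurable_fun setT (kapp (gamma Lam) f).
Proof. exact: (measurable_Rintegral measurable_gamma). Qed.

Lemma gamma_ae_eq_OmegaF {h : Omega d E -> R} (w : Omega d E) :
  measurable_fun setT (h : OmegaF d E (~` Lam) -> R) ->
  {ae gamma Lam w, forall x, h x = h w}.
Proof.
(* [{x | h x = h w}] is in [F_{Lam^c}] and contains [w], so it has probability 1. *)
move=> mh; pose S := h @^-1` [set h w].
have SC : sigmaF E (~` Lam) (~` S).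
  by apply: (@measurableC _ (OmegaF d E (~` Lam))); rewrite -[S]setTI; exact: mh.
exists (~` S); split.
- exact: sigmaF_measurable SC.
- rewrite (proj1 (proj2 (gamma_spec _ finite_Lam))) //.
  by rewrite indicE memNset //= => /(_ erefl).
- by move=> x /= nhx Sx; exact: nhx.
Qed.

Lemma kapp_mul_OmegaF {f h : Omega d E -> R} :
  measurable_fun setT f -> norm_bounded f ->
  measurable_fun setT (h : OmegaF d E (~` Lam) -> R) ->
  kapp (gamma Lam) (f \* h) = h \* kapp (gamma Lam) f.
Proof.
move=> mf bf mh; apply/funext => w.
apply: (Rintegral_mul_ae_cst _ mf bf) (gamma_ae_eq_OmegaF w mh).
exact: measurable_fun_OmegaF mh.
Qed.

Lemma kapp_consistent {Delta : set (Zd d)} {f : Omega d E -> R} :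
  finite_set Delta -> Lam `<=` Delta -> measurable_fun setT f -> norm_bounded f ->
  kapp (gamma Delta) (kapp (gamma Lam) f) = kapp (gamma Delta) f.
Proof.
move=> finD LD mf bf; apply/funext => w; apply/esym/Rintegral_mixture => //.
- exact: measurable_gamma.
- by move=> A mA; exact: (proj2 (proj2 (gamma_spec _ finite_Lam))).
Qed.

Lemma kapp_mul_swap {Delta : set (Zd d)} {f b : Omega d E -> R} :
  finite_set Delta -> Lam `<=` Delta ->
  measurable_fun setT f -> norm_bounded f ->
  measurable_fun setT b -> norm_bounded b ->
  kapp (gamma Delta) (f \* kapp (gamma Lam) b) =
  kapp (gamma Delta) (kapp (gamma Lam) f \* b).
Proof.
move=> finD LD mf bf mb bb.
set a := kapp (gamma Lam) f; set c := kapp (gamma Lam) b.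
have ma : measurable_fun setT a := measurable_kapp mf bf.
have mc : measurable_fun setT c := measurable_kapp mb bb.
have ba : norm_bounded a := norm_bounded_Rintegral mf bf.
have bc : norm_bounded c := norm_bounded_Rintegral mb bb.
rewrite -(kapp_consistent finD LD (measurable_funM mf mc) (norm_boundedM bf bc)).
rewrite -(kapp_consistent finD LD (measurable_funM ma mb) (norm_boundedM ba bb)).
have -> : a \* b = b \* a by apply/funext => w; rewrite /= mulrC.
rewrite !kapp_mul_OmegaF //; try exact: measurable_kapp_OmegaF.
by congr kapp; apply/funext => w; rewrite /= mulrC.
Qed.

End specification.

Theorem lemma6p2 (d : nat) (dE : measure_display) (E : measurableType dE)
    (R : realType)
    (gamma : set (Zd d) -> Omega d E -> probability (Omega d E) R) :
  specification gamma ->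
  forall (Lam Gam : set (Zd d)),
    finite_set Lam -> finite_set Gam -> Gam `<=` ~` Lam ->
  forall (f g : Omega d E -> R),
    measurable_fun setT f -> (exists M : R, forall x, `|f x| <= M) ->
    measurable_fun setT g -> (exists M : R, forall x, `|g x| <= M) ->
  kapp (gamma (Lam `|` Gam))
       (fun w => f w * kapp (gamma Lam) (kapp (gamma Gam) g) w)
  = kapp (gamma (Lam `|` Gam))
       (fun w => g w * kapp (gamma Gam) (kapp (gamma Lam) f) w).
Proof.
move=> spec Lam Gam finL finG _ f g mf bf mg bg.
have finLG : finite_set (Lam `|` Gam) by rewrite finite_setU.
rewrite (kapp_mul_swap spec finL finLG (@subsetUl _ Lam Gam) mf bf
  (measurable_kapp spec finG mg bg) (norm_bounded_Rintegral mg bg)).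
rewrite (kapp_mul_swap spec finG finLG (@subsetUr _ Lam Gam) mg bg
  (measurable_kapp spec finL mf bf) (norm_bounded_Rintegral mf bf)).
by congr kapp; apply/funext => w; rewrite /= mulrC.
Qed.
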